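(* Let $A\in\mathbb{C}^{m\times n}$ and let $A^{(1)}\in\mathbb{C}^{n\times m}$ satisfy $AA^{(1)}A=A$. Then the following are equivalent: (1) $A^{\mathfrak{m}}$ exists; (2) $A^{\sim}A+I_n-A^{(1)}A$ is nonsingular; (3) $AA^{\sim}+I_m-AA^{(1)}$ is nonsingular. In this case, $$A^{\mathfrak{m}}=\left(A(A^{\sim}A+I_n-A^{(1)}A)^{-1}\right)^{\sim}=\left((AA^{\sim}+I_m-AA^{(1)})^{-1}A\right)^{\sim}.$$
   Context: For a positive integer $k$, the Minkowski metric matrix of order $k$ is $G_k=\mathrm{diag}(1,-I_{k-1})$ (with $G_1=(1)$). For $M\in\mathbb{C}^{p\times q}$, the Minkowski adjoint is $M^{\sim}=G_qM^*G_p$, where $M^*$ is the conjugate transpose. The Minkowski inverse of $A\in\mathbb{C}^{m\times n}$, denoted $A^{\mathfrak{m}}$, is a matrix $X\in\mathbb{C}^{n\times m}$ with $AXA=A$, $XAX=X$, $(AX)^{\sim}=AX$, $(XA)^{\sim}=XA$ (unique if it exists). *)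

From HB Require Import structures.
From mathcomp Require Import all_boot all_order all_algebra.
Set Implicit Arguments. Unset Strict Implicit. Unset Printing Implicit Defensive.
Import Order.TTheory GRing.Theory Num.Theory.
Local Open Scope ring_scope.

(* Complex scalars: an arbitrary numClosedFieldType C (e.g. algC, or complex R
   for a real closed field R), with complex conjugation Num.conj. *)

Definition mink_G (C : numClosedFieldType) (k : nat) : 'M[C]_k :=
  \matrix_(i < k, j < k) (if i == j then (if val i == 0%N then 1 else -1) else 0).

Definition conjtr (C : numClosedFieldType) (p q : nat) (M : 'M[C]_(p, q))
  : 'M[C]_(q, p) := (map_mx Num.conj M)^T.

Definition madj (C : numClosedFieldType) (p q : nat) (M : 'M[C]_(p, q))
  : 'M[C]_(q, p) := mink_G C q *m conjtr M *m mink_G C p.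

Definition is_minkowski_inverse (C : numClosedFieldType) (m n : nat)
  (A : 'M[C]_(m, n)) (X : 'M[C]_(n, m)) : Prop :=
  [/\ A *m X *m A = A, X *m A *m X = X,
      madj (A *m X) = A *m X & madj (X *m A) = X *m A].

Definition minkowski_inverse_exists (C : numClosedFieldType) (m n : nat)
  (A : 'M[C]_(m, n)) : Prop := exists X, is_minkowski_inverse A X.

From HB Require Import structures.
From mathcomp Require Import all_boot all_order all_algebra.
Import GRing.Theory Num.Theory.
Set Implicit Arguments. Unset Strict Implicit.
Local Open Scope ring_scope.

(* The Minkowski adjoint is an additive, involutive anti-automorphism of the
   matrix algebra, and only these formal properties are used.  Put
   S = A~ A, P = A1 A and E = S + I - P.  Since A P = A we have E P = S and
   S E = S^2 = E~ S.  If E is invertible, then P = E^-1 S, so A = A E^-1 S,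
   and these identities verify the four Penrose-type equations for
   X = (A E^-1)~.  Conversely, given the Minkowski inverse X one has
   X A E = S and A = (A X X~) S, which produce an explicit left inverse of E.
   The statement about A A~ + I - A A1 follows by applying all this to the
   pair (A~, A1~), since (A A~ + I - A A1)~ = A A~ + I - A1~ A~. *)

Section MinkowskiAdjoint.
Variable C : numClosedFieldType.

Lemma conjtrM p q r (M : 'M[C]_(p, q)) (N : 'M[C]_(q, r)) :
  conjtr (M *m N) = conjtr N *m conjtr M.
Proof. by rewrite /conjtr map_mxM trmx_mul. Qed.

Lemma conjtrK p q (M : 'M[C]_(p, q)) : conjtr (conjtr M) = M.
Proof. by apply/matrixP=> i j; rewrite !mxE conjCK. Qed.

Lemma conjtrD p q (M N : 'M[C]_(p, q)) : conjtr (M + N) = conjtr M + conjtr N.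
Proof. by rewrite /conjtr map_mxD linearD. Qed.

Lemma conjtrB p q (M N : 'M[C]_(p, q)) : conjtr (M - N) = conjtr M - conjtr N.
Proof. by rewrite /conjtr map_mxB linearB. Qed.

Lemma conjtr1 p : conjtr (1%:M : 'M[C]_p) = 1%:M.
Proof. by rewrite /conjtr map_mx1 trmx1. Qed.

Lemma conjtr_mink_G p : conjtr (mink_G C p) = mink_G C p.
Proof.
apply/matrixP=> i j; rewrite !mxE eq_sym.
case: eqP => [->|_]; last by rewrite conjC0.
by case: ifP; rewrite ?rmorph1 ?rmorphN1.
Qed.

Lemma mink_G_sqr p : mink_G C p *m mink_G C p = 1%:M.
Proof.
apply/matrixP=> i j; rewrite !mxE (bigD1 i) //= big1 ?addr0; last first.
  by move=> k /negbTE nki; rewrite !mxE eq_sym nki mul0r.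
rewrite !mxE eqxx; case: (i =P j) => [->|_]; last by rewrite mulr0.
by case: ifP; rewrite ?mulr1 ?mulrNN ?mulr1.
Qed.

Lemma madjM p q r (M : 'M[C]_(p, q)) (N : 'M[C]_(q, r)) :
  madj (M *m N) = madj N *m madj M.
Proof.
rewrite /madj conjtrM !mulmxA; congr (_ *m _); congr (_ *m _).
by rewrite -mulmxA mink_G_sqr mulmx1.
Qed.

Lemma madjK p q (M : 'M[C]_(p, q)) : madj (madj M) = M.
Proof.
by rewrite /madj !conjtrM !conjtr_mink_G conjtrK !mulmxA mink_G_sqr mul1mx
  -mulmxA mink_G_sqr mulmx1.
Qed.

Lemma madjD p q (M N : 'M[C]_(p, q)) : madj (M + N) = madj M + madj N.
Proof. by rewrite /madj conjtrD mulmxDr mulmxDl. Qed.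

Lemma madjB p q (M N : 'M[C]_(p, q)) : madj (M - N) = madj M - madj N.
Proof. by rewrite /madj conjtrB mulmxBr mulmxBl. Qed.

Lemma madj1 p : madj (1%:M : 'M[C]_p) = 1%:M.
Proof. by rewrite /madj conjtr1 mulmx1 mink_G_sqr. Qed.

Lemma madj_gram p q (M : 'M[C]_(p, q)) : madj (madj M *m M) = madj M *m M.
Proof. by rewrite madjM madjK. Qed.

Lemma madj_unitmx p (M : 'M[C]_p) : (madj M \in unitmx) = (M \in unitmx).
Proof.
suff unit_madj N : N \in unitmx -> @madj C p p N \in unitmx.
  by apply/idP/idP => [/unit_madj|/unit_madj //]; rewrite madjK.
move=> /mulVmx /(congr1 (@madj C p p)).
by rewrite madjM madj1 => /mulmx1_unit [].
Qed.

Lemma madj_invmx p (M : 'M[C]_p) : M \in unitmx -> madj (invmx M) = invmx (madj M).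
Proof.
move=> Mu; have madjMu : madj M \in unitmx by rewrite madj_unitmx.
by rewrite -[LHS]mulmx1 -(mulmxV madjMu) mulmxA -madjM mulmxV // madj1 mul1mx.
Qed.

End MinkowskiAdjoint.

(* [madj] is transparent, so unconstrained rewrites with [mulmxA] or [madjM]
   may fire inside its unfolding; hence the explicitly instantiated steps. *)

Section MinkowskiInverse.
Variables (C : numClosedFieldType) (m n : nat).
Implicit Types (A : 'M[C]_(m, n)) (X Y : 'M[C]_(n, m)).

Lemma minkowski_inverse_madj A X :
  is_minkowski_inverse A X -> is_minkowski_inverse (madj A) (madj X).
Proof.
case=> AXA XAX AX_sa XA_sa; split.
- by rewrite -!madjM mulmxA AXA.
- by rewrite -!madjM mulmxA XAX.
- by rewrite -madjM XA_sa.
- by rewrite -madjM AX_sa.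
Qed.

Lemma minkowski_inverse_uniq A X Y :
  is_minkowski_inverse A X -> is_minkowski_inverse A Y -> X = Y.
Proof.
case=> AXA XAX AX_sa XA_sa [AYA YAY AY_sa YA_sa].
have AXY : A *m X = A *m Y.
  by rewrite -AX_sa -{1}AYA -mulmxA madjM AX_sa AY_sa mulmxA AXA.
have XYA : X *m A = Y *m A.
  rewrite -XA_sa -{1}AYA 2!mulmxA -mulmxA madjM YA_sa XA_sa -!mulmxA.
  by rewrite (mulmxA A X A) AXA.
by rewrite -XAX -(mulmxA X A X) AXY mulmxA XYA YAY.
Qed.

End MinkowskiInverse.

Lemma minkowski_inverse_exists_madj (C : numClosedFieldType) m n
    (A : 'M[C]_(m, n)) :
  minkowski_inverse_exists (madj A) <-> minkowski_inverse_exists A.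
Proof.
split=> [[X /minkowski_inverse_madj]|[X /minkowski_inverse_madj]].
  by rewrite madjK; exists (madj X).
by exists (madj X).
Qed.

Definition mink_lfactor (C : numClosedFieldType) m n
  (A : 'M[C]_(m, n)) (A1 : 'M[C]_(n, m)) : 'M[C]_n :=
  madj A *m A + 1%:M - A1 *m A.

Definition mink_rfactor (C : numClosedFieldType) m n
  (A : 'M[C]_(m, n)) (A1 : 'M[C]_(n, m)) : 'M[C]_m :=
  A *m madj A + 1%:M - A *m A1.

Lemma madj_mink_rfactor (C : numClosedFieldType) m n
    (A : 'M[C]_(m, n)) (A1 : 'M[C]_(n, m)) :
  madj (mink_rfactor A A1) = mink_lfactor (madj A) (madj A1).
Proof.
by rewrite /mink_rfactor /mink_lfactor madjB madjD madj1 (madjM A) (madjM A) madjK.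
Qed.

Lemma inner_inverse_madj (C : numClosedFieldType) m n
    (A : 'M[C]_(m, n)) (A1 : 'M[C]_(n, m)) :
  A *m A1 *m A = A -> madj A *m madj A1 *m madj A = madj A.
Proof. by move=> AA1A; rewrite -!madjM mulmxA AA1A. Qed.

Section InnerInverse.
Variables (C : numClosedFieldType) (m n : nat).
Variables (A : 'M[C]_(m, n)) (A1 : 'M[C]_(n, m)).
Hypothesis AA1A : A *m A1 *m A = A.

Local Notation E := (mink_lfactor A A1).

Lemma mink_lfactor_mul_inner : E *m (A1 *m A) = madj A *m A.
Proof.
have PP : A1 *m A *m (A1 *m A) = A1 *m A by rewrite -mulmxA (mulmxA A) AA1A.
have SP : madj A *m A *m (A1 *m A) = madj A *m A by rewrite -mulmxA (mulmxA A) AA1A.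
by rewrite /mink_lfactor mulmxBl mulmxDl mul1mx PP SP addrK.
Qed.

Lemma gram_mul_mink_lfactor :
  madj A *m A *m E = madj E *m (madj A *m A).
Proof.
have SP : madj A *m A *m (A1 *m A) = madj A *m A by rewrite -mulmxA (mulmxA A) AA1A.
rewrite /mink_lfactor madjB madjD madj1 madj_gram madjM.
rewrite mulmxBr mulmxDr mulmx1 SP mulmxBl mulmxDl mul1mx.
by rewrite (mulmxA (madj A *m madj A1)) inner_inverse_madj.
Qed.

Lemma mink_lfactor_unitmx X : is_minkowski_inverse A X -> E \in unitmx.
Proof.
case=> AXA _ AX_sa XA_sa.
have XAB : X *m A *m madj A = madj A by rewrite -{1}XA_sa -madjM mulmxA AXA.
have XAP : X *m A *m (A1 *m A) = X *m A by rewrite -mulmxA (mulmxA A) AA1A.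
have XAE : X *m A *m E = madj A *m A.
  by rewrite /mink_lfactor mulmxBr mulmxDr mulmx1 mulmxA XAB XAP addrK.
have AXXS : A *m X *m madj X *m (madj A *m A) = A.
  by rewrite mulmxA -(mulmxA (A *m X) (madj X)) -madjM AX_sa mulmxA !AXA.
have : (1%:M - X *m A + A1 *m (A *m X *m madj X) *m (X *m A)) *m E = 1%:M.
  rewrite mulmxDl mulmxBl mul1mx XAE -(mulmxA _ (X *m A)) XAE -mulmxA AXXS.
  by rewrite /mink_lfactor addrAC subrK addrAC subrr add0r.
by case/mulmx1_unit.
Qed.

Hypothesis E_unit : E \in unitmx.

Local Notation F := (madj (invmx E)).

Lemma inner_factor_through_gram : A *m invmx E *m (madj A *m A) = A.
Proof.
rewrite -mink_lfactor_mul_inner mulmxA -(mulmxA A) mulVmx // mulmx1.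
by rewrite mulmxA AA1A.
Qed.

Lemma gram_madj_inv_madj : madj A *m A *m F *m madj A = madj A.
Proof.
have EF : madj E *m F = 1%:M by rewrite -madjM mulVmx // madj1.
have P_SF : madj (A1 *m A) = madj A *m A *m F.
  by rewrite -[LHS]mulmx1 -EF mulmxA -madjM mink_lfactor_mul_inner madj_gram.
by rewrite -P_SF -madjM mulmxA AA1A.
Qed.

Lemma madj_inv_mul_gram : F *m (madj A *m A) = madj A *m A *m invmx E.
Proof.
have FE : F *m madj E = 1%:M by rewrite -madjM mulmxV // madj1.
rewrite -[LHS]mulmx1 -(mulmxV E_unit) (mulmxA (F *m _)) -(mulmxA F).
by rewrite gram_mul_mink_lfactor mulmxA FE mul1mx.
Qed.

Lemma minkowski_inverse_of_lfactor : is_minkowski_inverse A (madj (A *m invmx E)).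
Proof.
rewrite madjM.
have AFB : A *m (F *m madj A) = A *m invmx E *m madj A.
  rewrite -[X in X *m (F *m _)]inner_factor_through_gram -(mulmxA (A *m invmx E)).
  by rewrite (mulmxA (madj A *m A)) gram_madj_inv_madj.
split.
- by rewrite AFB -mulmxA inner_factor_through_gram.
- by rewrite -(mulmxA F) -mulmxA (mulmxA (madj A *m A)) gram_madj_inv_madj.
- by rewrite AFB madjM madjK madjM AFB.
- by rewrite -mulmxA madj_inv_mul_gram madjM madj_gram madj_inv_mul_gram.
Qed.

End InnerInverse.

Section Characterization.
Variable C : numClosedFieldType.

Lemma minkowski_inverse_exists_lfactor m n
    (A : 'M[C]_(m, n)) (A1 : 'M[C]_(n, m)) :
  A *m A1 *m A = A ->
  minkowski_inverse_exists A <-> mink_lfactor A A1 \in unitmx.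
Proof.
move=> AA1A; split=> [[X /(mink_lfactor_unitmx AA1A)] //|E_unit].
exists (madj (A *m invmx (mink_lfactor A A1))).
exact: minkowski_inverse_of_lfactor.
Qed.

Lemma minkowski_inverse_exists_rfactor m n
    (A : 'M[C]_(m, n)) (A1 : 'M[C]_(n, m)) :
  A *m A1 *m A = A ->
  minkowski_inverse_exists A <-> mink_rfactor A A1 \in unitmx.
Proof.
move=> AA1A; rewrite -madj_unitmx madj_mink_rfactor.
exact: iff_trans (iff_sym (minkowski_inverse_exists_madj A))
  (minkowski_inverse_exists_lfactor (inner_inverse_madj AA1A)).
Qed.

Lemma minkowski_inverse_lfactorE m n (A : 'M[C]_(m, n)) (A1 : 'M[C]_(n, m))
    (X : 'M[C]_(n, m)) :
  A *m A1 *m A = A -> is_minkowski_inverse A X ->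
  X = madj (A *m invmx (mink_lfactor A A1)).
Proof.
move=> AA1A XA; apply: (minkowski_inverse_uniq XA).
exact/minkowski_inverse_of_lfactor/(mink_lfactor_unitmx AA1A XA).
Qed.

Lemma minkowski_inverse_rfactorE m n (A : 'M[C]_(m, n)) (A1 : 'M[C]_(n, m))
    (X : 'M[C]_(n, m)) :
  A *m A1 *m A = A -> is_minkowski_inverse A X ->
  X = madj (invmx (mink_rfactor A A1) *m A).
Proof.
move=> AA1A XA; have R_unit : mink_rfactor A A1 \in unitmx.
  by apply/(minkowski_inverse_exists_rfactor AA1A); exists X.
rewrite -[X]madjK (minkowski_inverse_lfactorE (inner_inverse_madj AA1A)
  (minkowski_inverse_madj XA)).
by rewrite -madj_mink_rfactor madjK -madj_invmx // -madjM.
Qed.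

End Characterization.

Theorem theorem6p3 (C : numClosedFieldType) (m n : nat)
  (A : 'M[C]_(m, n)) (A1 : 'M[C]_(n, m)) :
  A *m A1 *m A = A ->
  (minkowski_inverse_exists A <->
     (madj A *m A + 1%:M - A1 *m A) \in unitmx) /\
  (minkowski_inverse_exists A <->
     (A *m madj A + 1%:M - A *m A1) \in unitmx) /\
  (forall X : 'M[C]_(n, m), is_minkowski_inverse A X ->
     X = madj (A *m invmx (madj A *m A + 1%:M - A1 *m A)) /\
     X = madj (invmx (A *m madj A + 1%:M - A *m A1) *m A)).
Proof.
move=> AA1A; split; first exact: minkowski_inverse_exists_lfactor.
split; first exact: minkowski_inverse_exists_rfactor.
move=> X XA; split.
- exact: minkowski_inverse_lfactorE.
- exact: minkowski_inverse_rfactorE.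
Qed.
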